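(* Let $\gamma>0$, $s\in(0,q^{-1/2})$, $h\in\mathcal M_s$, and let $g\in\mathcal I^\infty_\gamma$ be such that the series $\mu_\gamma(g)(t)$ converges absolutely for all $|t|\le(1-q)^{-1}q^{-1/2}s^{-1}$. Then $g*_\gamma h$ is a well-defined function and belongs to $\mathcal M_s$.
   Context: Fix $q\in(0,1)$. Notation: $(a;q)_k=\prod_{j=0}^{k-1}(1-aq^j)$, $(a;q)_\infty=\lim_k(a;q)_k$, $[k]_q!=(q;q)_k/(1-q)^k$, $e_q(x)=1/(x;q)_\infty$. The $q$-derivative is $(\partial f)(x)=\frac{f(x)-f(qx)}{(1-q)x}$ (extended to $x=0$ by continuity for $f$ holomorphic near $0$). For $\gamma>0$, $L(\gamma)=\{\pm q^k\gamma:k\in\mathbb Z\}$ and $\int_\gamma f=(1-q)\sum_{k\in\mathbb Z}\sum_{\epsilon=\pm1}q^k\gamma f(\epsilon q^k\gamma)$ whenever absolutely convergent. $\mathcal I^\infty_\gamma$ is the set of functions $f$ on $L(\gamma)$ with $\int_\gamma|f(x)x^e|<\infty$ for all integers $e\ge0$. Moments: $\mu_{e,\gamma}(f)=q^{(e^2+e)/2}\int_\gamma f(x)x^e$. The $q$-moment series is $\mu_\gamma(f)(t)=\sum_{k\ge0}\mu_{k,\gamma}(f)t^k/[k]_q!$. The $q$-convolution of $f\in\mathcal I^\infty_\gamma$ with $g$ is $(f*_\gamma g)(x)=\sum_{e\ge0}\frac{(-1)^e\mu_{e,\gamma}(f)}{[e]_q!}(\partial^eg)(x)$ at all $x$ where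 the $q$-derivatives are defined and the series converges absolutely. For $s>0$, $\mathcal M_s$ is the set of functions $F(x)=f(x)e_{q^2}(-x^2)$ (holomorphic on $|\mathrm{Im}\,x|<1$) where $f(x)=\sum_{l\ge0}a_lx^l$ with $|a_l|\le Cs^lq^{l^2/2}$ for all $l$, for some $C>0$. *)

From Stdlib Require Import Reals ZArith.
From Coquelicot Require Import Coquelicot.
Open Scope R_scope.

Definition Clim (u : nat -> C) : C :=
  (real (Lim_seq (fun n => Re (u n))), real (Lim_seq (fun n => Im (u n)))).

(* sum of a complex series (meaningful when it converges) *)
Definition Csum (a : nat -> C) : C :=
  Clim (fun n => sum_n a n).

Fixpoint qpochR (a q : R) (k : nat) : R :=
  match k with O => 1 | S k' => qpochR a q k' * (1 - a * q ^ k') end.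
Fixpoint qpochC (a : C) (q : R) (k : nat) : C :=
  match k with O => RtoC 1 | S k' => Cmult (qpochC a q k') (Cminus (RtoC 1) (Cmult a (RtoC (q ^ k')))) end.

Definition qpoch_inf (a : C) (q : R) : C := Clim (qpochC a q).
Definition e_q (q : R) (x : C) : C := Cinv (qpoch_inf x q).

Definition qfact (q : R) (k : nat) : R := qpochR q q k / (1 - q) ^ k.

(* q-difference quotient and q-derivative, extended to 0 by continuity *)
Definition qdiffquot (q : R) (f : C -> C) (x : C) : C :=
  Cdiv (Cminus (f x) (f (Cmult (RtoC q) x))) (Cmult (RtoC (1 - q)) x).
Definition qderiv (q : R) (f : C -> C) (x : C) : C :=
  match Req_EM_T (Re x) 0, Req_EM_T (Im x) 0 with
  | left _, left _ => @lim C_CompleteNormedModule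
                         (filtermap (qdiffquot q f) (@locally' C_UniformSpace (RtoC 0)))
  | _, _ => qdiffquot q f x
  end.
Definition qderiv_n (q : R) (n : nat) (f : C -> C) : C -> C :=
  Nat.iter n (qderiv q) f.

(* Points of the lattice L(gamma): q^k gamma, k in Z, split into k = n >= 0 and k = -(n+1) *)
Definition kpos (n : nat) : Z := Z.of_nat n.
Definition kneg (n : nat) : Z := (- Z.of_nat (S n))%Z.

Definition qint_abs_conv (q gamma : R) (f : R -> C) : Prop :=
  ex_series (fun n => powerRZ q (kpos n) * gamma *
      (Cmod (f (powerRZ q (kpos n) * gamma)) + Cmod (f (- (powerRZ q (kpos n) * gamma))))) /\
  ex_series (fun n => powerRZ q (kneg n) * gamma *
      (Cmod (f (powerRZ q (kneg n) * gamma)) + Cmod (f (- (powerRZ q (kneg n) * gamma))))).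

(* int_gamma f = (1-q) sum_{k in Z} sum_{eps = +-1} q^k gamma f(eps q^k gamma) *)
Definition qint (q gamma : R) (f : R -> C) : C :=
  Cmult (RtoC (1 - q))
   (Cplus
     (Csum (fun n => Cmult (RtoC (powerRZ q (kpos n) * gamma))
        (Cplus (f (powerRZ q (kpos n) * gamma)) (f (- (powerRZ q (kpos n) * gamma))))))
     (Csum (fun n => Cmult (RtoC (powerRZ q (kneg n) * gamma))
        (Cplus (f (powerRZ q (kneg n) * gamma)) (f (- (powerRZ q (kneg n) * gamma))))))).

Definition in_Iinf (q gamma : R) (g : R -> C) : Prop :=
  forall e : nat, qint_abs_conv q gamma (fun x => Cmult (g x) (Cpow (RtoC x) e)).

Definition qmoment (q gamma : R) (g : R -> C) (e : nat) : C :=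
  Cmult (RtoC (q ^ ((e * e + e) / 2)))
        (qint q gamma (fun x => Cmult (g x) (Cpow (RtoC x) e))).

Definition qmoment_series_term (q gamma : R) (g : R -> C) (t : C) (k : nat) : C :=
  Cdiv (Cmult (qmoment q gamma g k) (Cpow t k)) (RtoC (qfact q k)).

Definition qconv_term (q gamma : R) (g : R -> C) (h : C -> C) (x : C) (e : nat) : C :=
  Cmult (Cdiv (Cmult (RtoC ((-1) ^ e)) (qmoment q gamma g e)) (RtoC (qfact q e)))
        (qderiv_n q e h x).

Definition qconv (q gamma : R) (g : R -> C) (h : C -> C) (x : C) : C :=
  Csum (qconv_term q gamma g h x).

Definition in_strip (x : C) : Prop := Rabs (Im x) < 1.

Definition in_Ms (q s : R) (F : C -> C) : Prop :=
  exists (a : nat -> C) (Cst : R), 0 < Cst /\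
    (forall l : nat, Cmod (a l) <= Cst * s ^ l * Rpower q (INR (l * l) / 2)) /\
    (forall x : C, in_strip x ->
       F x = Cmult (Csum (fun l => Cmult (a l) (Cpow x l)))
                   (e_q (q ^ 2) (Copp (Cmult x x)))).

(* Write h = f E with E(x) = e_{q^2}(-x^2) and f(x) = sum_l a_l x^l, |a_l| <= C s^l q^(l^2/2).
   Because E(q x) = (1 + x^2) E(x), the q-derivative of f E is again of the form f' E, where each
   coefficient of f' is a combination of a_(l+1) and a_(l-1).  Against the majorant
   s^l q^(l^2/2) / (q;q)_l this operation costs exactly the factor T = 1 / ((1-q) q^(1/2) s)
   (here s^2 q < 1 is used), and 1 / (q;q)_l is bounded independently of l, so the e-th
   q-derivative of h is f_e E with |coefficients of f_e| <= C' T^e s^l q^(l^2/2).  Convergence of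
   the moment series at t = T then makes the double series over (e, l) defining g * h absolutely
   convergent, and summing over e first exhibits g * h as f'' E with coefficients of the same
   size. *)

From Stdlib Require Import Reals Lra Lia FunctionalExtensionality.
From Coquelicot Require Import Coquelicot.
Open Scope R_scope.

(** * Complex limits and series *)

Lemma ball_of_Cmod_lt (x y : C) (eps : R) :
  Cmod (Cminus y x) < eps -> @ball C_UniformSpace x eps y.
Proof. exact (@norm_compat1 C_AbsRing C_NormedModule x y eps). Qed.

Lemma Cmod_lt_of_ball (x y : C) (eps : posreal) :
  @ball C_UniformSpace x eps y -> Cmod (Cminus y x) < sqrt 2 * eps.
Proof. exact (@norm_compat2 C_AbsRing C_NormedModule x y eps). Qed.

Lemma sqrt2_lt_2 : sqrt 2 < 2.
Proof.
  assert (sqrt 2 * sqrt 2 = 2) by (apply sqrt_sqrt; lra).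
  assert (0 <= sqrt 2) by apply sqrt_pos. nra.
Qed.

Lemma Cminus_0_r (z : C) : Cminus z (RtoC 0) = z.
Proof. unfold Cminus. ring. Qed.

Lemma Cmod_Cminus_sym (x y : C) : Cmod (Cminus x y) = Cmod (Cminus y x).
Proof. replace (Cminus x y) with (Copp (Cminus y x)) by (unfold Cminus; ring). apply Cmod_opp. Qed.

Lemma Cmod_Cminus_le (x y : C) : Cmod (Cminus x y) <= Cmod x + Cmod y.
Proof. unfold Cminus. rewrite <- (Cmod_opp y). apply Cmod_triangle. Qed.

Lemma RtoC_neq0 (x : R) : x <> 0 -> RtoC x <> RtoC 0.
Proof. intros H E. apply H. exact (f_equal fst E). Qed.

Lemma Clim_eq (u : nat -> C) (L : C) : filterlim u eventually (locally L) -> Clim u = L.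
Proof.
  intros H. unfold Clim.
  assert (HR : is_lim_seq (fun n => Re (u n)) (Re L)).
  { apply is_lim_seq_spec. intros eps.
    generalize (proj1 (filterlim_locally _ _) H eps). apply filter_imp. now intros n [H1 _]. }
  assert (HI : is_lim_seq (fun n => Im (u n)) (Im L)).
  { apply is_lim_seq_spec. intros eps.
    generalize (proj1 (filterlim_locally _ _) H eps). apply filter_imp. now intros n [_ H2]. }
  rewrite (is_lim_seq_unique _ _ HR), (is_lim_seq_unique _ _ HI). now destruct L.
Qed.

Lemma Csum_eq (a : nat -> C) (L : C) : is_series a L -> Csum a = L.
Proof. apply Clim_eq. Qed.

Lemma is_series_Csum (a : nat -> C) : ex_series a -> is_series a (Csum a).
Proof. intros [L HL]. now rewrite (Csum_eq a L HL). Qed.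

Lemma filterlim_of_Cmod_le (u : nat -> C) (L : C) (B : nat -> R) :
  (forall n, Cmod (Cminus (u n) L) <= B n) -> is_lim_seq B 0 ->
  filterlim u eventually (locally L).
Proof.
  intros H HB. apply (proj2 (filterlim_locally _ _)). intros eps.
  generalize (proj2 (is_lim_seq_spec _ _) HB eps). apply filter_imp.
  intros n Hn. apply ball_of_Cmod_lt. rewrite Rminus_0_r in Hn.
  apply Rle_lt_trans with (1 := H n). apply Rle_lt_trans with (2 := Hn). apply Rle_abs.
Qed.

Lemma is_lim_seq_Cmod_sub (u : nat -> C) (L : C) :
  filterlim u eventually (locally L) -> is_lim_seq (fun n => Cmod (Cminus (u n) L)) 0.
Proof.
  intros H. apply is_lim_seq_spec. intros eps.
  assert (Hs : 0 < sqrt 2) by (apply sqrt_lt_R0; lra).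
  assert (He : 0 < eps / sqrt 2) by (apply Rdiv_lt_0_compat; [apply cond_pos | exact Hs]).
  generalize (proj1 (filterlim_locally _ _) H (mkposreal _ He)). apply filter_imp.
  intros n Hn. apply Cmod_lt_of_ball in Hn. simpl in Hn.
  rewrite Rminus_0_r, Rabs_pos_eq by apply Cmod_ge_0.
  replace (sqrt 2 * (eps / sqrt 2)) with (pos eps) in Hn by (field; lra). exact Hn.
Qed.

Lemma Cmod_le_of_filterlim (u : nat -> C) (L : C) (v : nat -> R) (B : R) :
  filterlim u eventually (locally L) -> is_lim_seq v B ->
  (forall n, Cmod (u n) <= v n) -> Cmod L <= B.
Proof.
  intros Hu Hv H.
  apply (is_lim_seq_le (fun n => Cmod (u n)) v (Cmod L) B H); [|exact Hv].
  apply (filterlim_comp _ _ _ u norm _ _ _ Hu). apply (@filterlim_norm C_AbsRing C_NormedModule).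
Qed.

Lemma is_series_Cmod_le (a : nat -> C) (L : C) (b : nat -> R) (B : R) :
  is_series a L -> is_series b B -> (forall n, Cmod (a n) <= b n) -> Cmod L <= B.
Proof.
  intros Ha Hb H. apply (Cmod_le_of_filterlim (sum_n a) L (sum_n b) B Ha Hb).
  intros n. induction n.
  - rewrite !sum_O. apply H.
  - rewrite !sum_Sn. apply Rle_trans with (1 := Cmod_triangle _ _).
    apply Rplus_le_compat; [exact IHn | apply H].
Qed.

Lemma ex_series_Cmod_le (a : nat -> C) (b : nat -> R) :
  (forall n, Cmod (a n) <= b n) -> ex_series b -> ex_series a.
Proof. exact (@ex_series_le C_AbsRing C_CompleteNormedModule a b). Qed.

Lemma filterlim_Cmult_l (u : nat -> C) (L c : C) : filterlim u eventually (locally L) ->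
  filterlim (fun n => Cmult c (u n)) eventually (locally (Cmult c L)).
Proof.
  intros H. apply filterlim_of_Cmod_le with (B := fun n => Cmod c * Cmod (Cminus (u n) L)).
  - intros n. replace (Cminus (Cmult c (u n)) (Cmult c L)) with (Cmult c (Cminus (u n) L))
      by (unfold Cminus; ring). rewrite Cmod_mult. lra.
  - replace 0 with (Cmod c * 0) by ring. apply (is_lim_seq_scal_l _ (Cmod c) 0).
    now apply is_lim_seq_Cmod_sub.
Qed.

Lemma filterlim_of_succ (u : nat -> C) (L : C) :
  filterlim (fun n => u (S n)) eventually (locally L) -> filterlim u eventually (locally L).
Proof.
  intros H. apply (proj2 (filterlim_locally _ _)). intros eps.
  destruct (proj1 (filterlim_locally _ _) H eps) as [N HN]. exists (S N).
  intros [|m] Hm; [lia|]. apply HN. lia.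
Qed.

Lemma sum_n_telescope (u : nat -> C) (n : nat) :
  sum_n (fun k => Cminus (u (S k)) (u k)) n = Cminus (u (S n)) (u O).
Proof.
  induction n.
  - now rewrite sum_O.
  - rewrite sum_Sn, IHn. change (Cplus (Cminus (u (S n)) (u O)) (Cminus (u (S (S n))) (u (S n))) =
      Cminus (u (S (S n))) (u O)). unfold Cminus. ring.
Qed.

Lemma Cmod_series_tail_le (u : nat -> C) (L : C) (al : nat -> R) (Sa c : R) (N : nat) :
  is_series u L -> is_series al Sa -> (forall e, Cmod (u e) <= al e * c) ->
  Cmod (Cminus L (sum_n u N)) <= c * (Sa - sum_n al N).
Proof.
  intros Hu HSa H.
  assert (H1 : is_series (fun k => u (S N + k)%nat) (Cminus L (sum_n u N))).
  { apply (is_series_incr_n u (S N)); [lia|]. simpl pred.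
    replace (plus _ _) with L by (change (L = Cplus (Cminus L (sum_n u N)) (sum_n u N)); unfold Cminus; ring).
    exact Hu. }
  assert (H2 : is_series (fun k => al (S N + k)%nat) (Sa - sum_n al N)).
  { apply (is_series_incr_n al (S N)); [lia|]. simpl pred.
    replace (plus _ _) with Sa by (change (Sa = (Sa - sum_n al N) + sum_n al N); ring). exact HSa. }
  apply (is_series_Cmod_le _ _ (fun k => c * al (S N + k)%nat) _ H1).
  - now apply (@is_series_scal R_AbsRing R_NormedModule c).
  - intros k. rewrite Rmult_comm. apply H.
Qed.

Lemma is_series_Csum_swap (u : nat -> nat -> C) (al be : nat -> R) (Sa Sb : R) :
  (forall e l, Cmod (u e l) <= al e * be l) -> is_series al Sa -> is_series be Sb ->
  is_series (fun e => Csum (u e)) (Csum (fun l => Csum (fun e => u e l))).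
Proof.
  intros Hu HSa HSb.
  assert (Hrow : forall e, is_series (u e) (Csum (u e))).
  { intros e. apply is_series_Csum, ex_series_Cmod_le with (b := fun l => al e * be l); [apply Hu|].
    apply (@ex_series_scal_l R_AbsRing R_NormedModule (al e) be). eexists; exact HSb. }
  assert (Hcol : forall l, is_series (fun e => u e l) (Csum (fun e => u e l))).
  { intros l. apply is_series_Csum, ex_series_Cmod_le with (b := fun e => al e * be l); [intros; apply Hu|].
    apply ex_series_scal_r. eexists; exact HSa. }
  set (B := fun l => Csum (fun e => u e l)).
  assert (HBs : is_series B (Csum B)).
  { apply is_series_Csum, ex_series_Cmod_le with (b := fun l => Sa * be l).
    - intros l. apply (is_series_Cmod_le (fun e => u e l) _ (fun e => al e * be l)).
      + apply Hcol.
      + now apply is_series_scal_r.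
      + intros; apply Hu.
    - apply (@ex_series_scal_l R_AbsRing R_NormedModule Sa be). eexists; exact HSb. }
  assert (Hpartial : forall N, is_series (fun l => sum_n (fun e => u e l) N) (sum_n (fun e => Csum (u e)) N)).
  { induction N.
    - apply (is_series_ext (u O)); [intros l; now rewrite sum_O|]. rewrite sum_O. apply Hrow.
    - apply (is_series_ext (fun l => plus (sum_n (fun e => u e l) N) (u (S N) l))).
      + intros l. now rewrite sum_Sn.
      + rewrite sum_Sn. exact (is_series_plus _ _ _ _ IHN (Hrow (S N))). }
  assert (Htail : forall N l, Cmod (Cminus (B l) (sum_n (fun e => u e l) N)) <= be l * (Sa - sum_n al N)).
  { intros N l. apply (Cmod_series_tail_le (fun e => u e l)); [apply Hcol | exact HSa |].
    intros e. apply Hu. }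
  apply filterlim_of_Cmod_le with (B := fun N => Sb * (Sa - sum_n al N)).
  - intros N. rewrite Cmod_Cminus_sym.
    apply (is_series_Cmod_le _ _ (fun l => be l * (Sa - sum_n al N)) _
             (is_series_minus _ _ _ _ HBs (Hpartial N))).
    + now apply is_series_scal_r.
    + apply Htail.
  - replace 0 with (Sb * (Sa - Sa)) by ring. apply (is_lim_seq_scal_l _ Sb (Sa - Sa)).
    apply is_lim_seq_minus'; [apply is_lim_seq_const | exact HSa].
Qed.

(** * The q-Pochhammer product *)

Lemma exp_le_exp (x y : R) : x <= y -> exp x <= exp y.
Proof. intros [H|H]; [now left; apply exp_increasing | subst; lra]. Qed.

Lemma exp_sub1_le (t : R) : 0 <= t <= 1 -> exp t - 1 <= 3 * t.
Proof.
  intros Ht. generalize (exp_ineq1_le (- t)). intros H1.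
  assert (H2 : exp t * exp (- t) = 1) by (rewrite <- exp_plus, Rplus_opp_r; apply exp_0).
  assert (H3 : exp t <= 3) by (eapply Rle_trans; [apply exp_le_exp; apply Ht | apply exp_le_3]).
  assert (0 < exp t) by apply exp_pos.
  assert (exp t - 1 <= t * exp t) by nra. nra.
Qed.

Lemma qpochC_sub1_le_partial (w : C) (p : R) (n : nat) : 0 < p < 1 ->
  Cmod (Cminus (qpochC w p n) (RtoC 1)) <= exp (Cmod w * (1 - p ^ n) / (1 - p)) - 1.
Proof.
  intros Hp. induction n.
  - simpl. replace (Cminus (RtoC 1) (RtoC 1)) with (RtoC 0) by (unfold Cminus; ring).
    rewrite Cmod_0. replace (Cmod w * (1 - 1) / (1 - p)) with 0 by (field; lra). rewrite exp_0. lra.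
  - change (qpochC w p (S n)) with (Cmult (qpochC w p n) (Cminus (RtoC 1) (Cmult w (RtoC (p ^ n))))).
    set (u := qpochC w p n) in *.
    set (z := Cmult w (RtoC (p ^ n))).
    assert (Hz : Cmod z = Cmod w * p ^ n).
    { unfold z. rewrite Cmod_mult, Cmod_R, Rabs_pos_eq; [ring | apply pow_le; lra]. }
    replace (Cminus (Cmult u (Cminus (RtoC 1) z)) (RtoC 1))
      with (Cminus (Cmult (Cminus u (RtoC 1)) (Cminus (RtoC 1) z)) z) by (unfold Cminus; ring).
    assert (H1 : Cmod (Cminus (RtoC 1) z) <= 1 + Cmod z)
      by (rewrite <- Cmod_1 at 2; apply Cmod_Cminus_le).
    assert (H2 : Cmod (Cminus (Cmult (Cminus u (RtoC 1)) (Cminus (RtoC 1) z)) z) <=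
              Cmod (Cminus u (RtoC 1)) * (1 + Cmod z) + Cmod z).
    { eapply Rle_trans; [apply Cmod_Cminus_le|]. rewrite Cmod_mult.
      apply Rplus_le_compat_r, Rmult_le_compat_l; [apply Cmod_ge_0 | exact H1]. }
    set (A := Cmod w * (1 - p ^ n) / (1 - p)) in *.
    assert (HA : A + Cmod z = Cmod w * (1 - p ^ S n) / (1 - p)) by (unfold A; rewrite Hz; simpl; field; lra).
    rewrite <- HA, exp_plus.
    assert (H3 : 1 + Cmod z <= exp (Cmod z)) by (generalize (exp_ineq1_le (Cmod z)); lra).
    assert (0 <= Cmod z) by apply Cmod_ge_0.
    assert (0 < exp A) by apply exp_pos.
    assert (Cmod (Cminus u (RtoC 1)) * (1 + Cmod z) <= (exp A - 1) * (1 + Cmod z))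
      by (apply Rmult_le_compat_r; lra).
    assert (exp A * (1 + Cmod z) <= exp A * exp (Cmod z)) by (apply Rmult_le_compat_l; lra).
    nra.
Qed.

Lemma qpochC_sub1_le (w : C) (p : R) (n : nat) : 0 < p < 1 ->
  Cmod (Cminus (qpochC w p n) (RtoC 1)) <= exp (Cmod w / (1 - p)) - 1.
Proof.
  intros Hp. eapply Rle_trans; [now apply qpochC_sub1_le_partial|].
  apply Rplus_le_compat_r, exp_le_exp.
  assert (0 < p ^ n) by (apply pow_lt; lra). assert (0 <= Cmod w) by apply Cmod_ge_0.
  apply Rmult_le_compat_r; [left; apply Rinv_0_lt_compat; lra | nra].
Qed.

Lemma Cmod_qpochC_le (w : C) (p : R) (n : nat) : 0 < p < 1 ->
  Cmod (qpochC w p n) <= exp (Cmod w / (1 - p)).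
Proof.
  intros Hp. generalize (qpochC_sub1_le w p n Hp). intros H.
  replace (qpochC w p n) with (Cplus (Cminus (qpochC w p n) (RtoC 1)) (RtoC 1)) by (unfold Cminus; ring).
  eapply Rle_trans; [apply Cmod_triangle|]. rewrite Cmod_1. lra.
Qed.

Lemma qpochC_cvg (w : C) (p : R) : 0 < p < 1 ->
  filterlim (qpochC w p) eventually (locally (qpoch_inf w p)).
Proof.
  intros Hp.
  set (d := fun k => Cminus (qpochC w p (S k)) (qpochC w p k)).
  assert (Hd : ex_series d).
  { apply ex_series_Cmod_le with (b := fun n => exp (Cmod w / (1 - p)) * Cmod w * p ^ n).
    - intros n. unfold d. simpl qpochC.
      replace (Cminus (Cmult (qpochC w p n) (Cminus (RtoC 1) (Cmult w (RtoC (p ^ n))))) (qpochC w p n))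
        with (Copp (Cmult (qpochC w p n) (Cmult w (RtoC (p ^ n))))) by (unfold Cminus; ring).
      rewrite Cmod_opp, !Cmod_mult, Cmod_R, Rabs_pos_eq by (apply pow_le; lra).
      rewrite <- Rmult_assoc.
      apply Rmult_le_compat_r; [apply pow_le; lra|].
      apply Rmult_le_compat_r; [apply Cmod_ge_0 | now apply Cmod_qpochC_le].
    - apply (@ex_series_scal_l R_AbsRing R_NormedModule _ (fun n => p ^ n)).
      apply ex_series_geom. rewrite Rabs_pos_eq; lra. }
  destruct Hd as [D HD].
  assert (Hlim : filterlim (qpochC w p) eventually (locally (Cplus D (RtoC 1)))).
  { apply filterlim_of_succ.
    apply (filterlim_ext (fun n => Cplus (sum_n d n) (RtoC 1))).
    - intros n. unfold d. rewrite sum_n_telescope. simpl. unfold Cminus. ring.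
    - apply filterlim_of_Cmod_le with (B := fun n => Cmod (Cminus (sum_n d n) D)).
      + intros n. right. f_equal. unfold Cminus. ring.
      + now apply is_lim_seq_Cmod_sub. }
  unfold qpoch_inf. now rewrite (Clim_eq _ _ Hlim).
Qed.

Lemma qpochC_S_shift (w : C) (p : R) (n : nat) :
  qpochC w p (S n) = Cmult (Cminus (RtoC 1) w) (qpochC (Cmult (RtoC p) w) p n).
Proof.
  induction n.
  - simpl. unfold Cminus. ring.
  - change (qpochC w p (S (S n))) with
      (Cmult (qpochC w p (S n)) (Cminus (RtoC 1) (Cmult w (RtoC (p * p ^ n))))).
    rewrite IHn. simpl qpochC. rewrite RtoC_mult. unfold Cminus. ring.
Qed.

Lemma qpoch_inf_shift (w : C) (p : R) : 0 < p < 1 ->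
  qpoch_inf w p = Cmult (Cminus (RtoC 1) w) (qpoch_inf (Cmult (RtoC p) w) p).
Proof.
  intros Hp. apply Clim_eq, filterlim_of_succ.
  apply (filterlim_ext (fun n => Cmult (Cminus (RtoC 1) w) (qpochC (Cmult (RtoC p) w) p n))).
  - intros n. now rewrite qpochC_S_shift.
  - now apply filterlim_Cmult_l, qpochC_cvg.
Qed.

Lemma qpoch_inf_sub1_le (w : C) (p : R) : 0 < p < 1 ->
  Cmod (Cminus (qpoch_inf w p) (RtoC 1)) <= exp (Cmod w / (1 - p)) - 1.
Proof.
  intros Hp.
  apply (Cmod_le_of_filterlim (fun n => Cminus (qpochC w p n) (RtoC 1)) _ (fun _ => exp (Cmod w / (1 - p)) - 1)).
  - apply filterlim_of_Cmod_le with (B := fun n => Cmod (Cminus (qpochC w p n) (qpoch_inf w p))).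
    + intros n. right. f_equal. unfold Cminus. ring.
    + now apply is_lim_seq_Cmod_sub, qpochC_cvg.
  - apply is_lim_seq_const.
  - intros n. now apply qpochC_sub1_le.
Qed.

Lemma qpoch_inf_0 (p : R) : qpoch_inf (RtoC 0) p = RtoC 1.
Proof.
  apply Clim_eq, (filterlim_ext (fun _ => RtoC 1)); [|apply filterlim_const].
  intros n. induction n as [|n IH]; [reflexivity|]. simpl. rewrite <- IH. unfold Cminus. ring.
Qed.

(** * The factor e_{q^2}(-x^2) *)

Definition gauss_q (q : R) (y : C) : C := e_q (q ^ 2) (Copp (Cmult y y)).

(* [Cinv 0 = 0] in Coquelicot, so the identity needs only one nonzero factor. *)
Lemma Cinv_mult_l_neq0 (a b : C) : a <> RtoC 0 -> Cinv (Cmult a b) = Cmult (Cinv a) (Cinv b).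
Proof.
  intros Ha. destruct (Ceq_dec b (RtoC 0)) as [Hb|Hb]; [|field; split; assumption].
  subst. rewrite Cmult_0_r.
  replace (Cinv (RtoC 0)) with (RtoC 0) by (unfold Cinv, RtoC; simpl; f_equal; unfold Rdiv; ring).
  ring.
Qed.

Lemma gauss_q_qmul (q : R) (y : C) : 0 < q < 1 -> Cplus (RtoC 1) (Cmult y y) <> RtoC 0 ->
  gauss_q q (Cmult (RtoC q) y) = Cmult (Cplus (RtoC 1) (Cmult y y)) (gauss_q q y).
Proof.
  intros Hq Hy. unfold gauss_q, e_q.
  assert (Hp : 0 < q ^ 2 < 1) by (split; nra).
  rewrite (qpoch_inf_shift (Copp (Cmult y y)) (q ^ 2) Hp).
  replace (Cminus (RtoC 1) (Copp (Cmult y y))) with (Cplus (RtoC 1) (Cmult y y)) by (unfold Cminus; ring).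
  replace (Cmult (RtoC (q ^ 2)) (Copp (Cmult y y)))
    with (Copp (Cmult (Cmult (RtoC q) y) (Cmult (RtoC q) y))) by (simpl; rewrite !RtoC_mult; ring).
  rewrite Cinv_mult_l_neq0 by exact Hy.
  set (P := qpoch_inf _ _). set (Y := Cplus (RtoC 1) (Cmult y y)) in *.
  replace (Cmult Y (Cmult (Cinv Y) (Cinv P))) with (Cmult (Cmult Y (Cinv Y)) (Cinv P)) by ring.
  rewrite Cinv_r by exact Hy. ring.
Qed.

Lemma gauss_q_0 (q : R) : gauss_q q (RtoC 0) = RtoC 1.
Proof.
  unfold gauss_q, e_q. replace (Copp (Cmult (RtoC 0) (RtoC 0))) with (RtoC 0) by ring.
  rewrite qpoch_inf_0. unfold Cinv, RtoC; simpl. apply injective_projections; simpl; field.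
Qed.

Lemma Cmod_Cinv_sub1_le (z : C) : Cmod (Cminus z (RtoC 1)) <= / 2 ->
  Cmod (Cminus (Cinv z) (RtoC 1)) <= 2 * Cmod (Cminus z (RtoC 1)).
Proof.
  intros H.
  assert (Hz : / 2 <= Cmod z).
  { generalize (Cmod_Cminus_le z (Cminus z (RtoC 1))).
    replace (Cminus z (Cminus z (RtoC 1))) with (RtoC 1) by (unfold Cminus; ring).
    rewrite Cmod_1. lra. }
  assert (Hz0 : z <> RtoC 0) by (intros E; rewrite E, Cmod_0 in Hz; lra).
  replace (Cminus (Cinv z) (RtoC 1)) with (Cmult (Copp (Cminus z (RtoC 1))) (Cinv z))
    by (field; exact Hz0).
  rewrite Cmod_mult, Cmod_opp, Cmod_inv by exact Hz0.
  assert (0 <= Cmod (Cminus z (RtoC 1))) by apply Cmod_ge_0.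
  assert (/ Cmod z <= 2) by (rewrite <- (Rinv_inv 2); apply Rinv_le_contravar; lra).
  nra.
Qed.

Lemma gauss_q_sub1_le (q : R) (y : C) : 0 < q < 1 -> Cmod y <= (1 - q ^ 2) / 6 ->
  Cmod (Cminus (gauss_q q y) (RtoC 1)) <= 6 / (1 - q ^ 2) * Cmod y.
Proof.
  intros Hq Hy. assert (Hp : 0 < q ^ 2 < 1) by (split; nra).
  assert (Hy0 : 0 <= Cmod y) by apply Cmod_ge_0.
  assert (Hqinf : Cmod (Cminus (qpoch_inf (Copp (Cmult y y)) (q ^ 2)) (RtoC 1))
                  <= exp (Cmod y / (1 - q ^ 2)) - 1).
  { eapply Rle_trans; [now apply qpoch_inf_sub1_le|].
    apply Rplus_le_compat_r, exp_le_exp. rewrite Cmod_opp, Cmod_mult.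
    apply Rmult_le_compat_r; [left; apply Rinv_0_lt_compat; lra | nra]. }
  assert (Ht : 0 <= Cmod y / (1 - q ^ 2) <= 1).
  { split; [apply Rdiv_le_0_compat; lra|].
    apply Rmult_le_reg_r with (1 - q ^ 2); [lra|].
    unfold Rdiv. rewrite Rmult_assoc, Rinv_l by lra. lra. }
  generalize (exp_sub1_le _ Ht). intros H2.
  assert (H3 : 3 * (Cmod y / (1 - q ^ 2)) <= / 2).
  { apply Rmult_le_reg_r with (1 - q ^ 2); [lra|].
    unfold Rdiv. rewrite Rmult_assoc, Rmult_assoc, Rinv_l by lra. lra. }
  unfold gauss_q, e_q. eapply Rle_trans; [apply Cmod_Cinv_sub1_le; lra|].
  replace (6 / (1 - q ^ 2) * Cmod y) with (2 * (3 * (Cmod y / (1 - q ^ 2)))) by (field; lra).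
  lra.
Qed.

(** * Coefficients of q-derivatives *)

Definition weight (q s : R) (l : nat) : R := s ^ l * sqrt q ^ (l * l).
Definition qnat (q : R) (n : nat) : R := (1 - q ^ n) / (1 - q).

(* If [F = f * gauss_q q] with [f = sum_l a_l x^l], then [qderiv q F = f' * gauss_q q]
   where [f'] has the coefficients [coef_qderiv q a] (see [qdiffquot_Cpser_gauss]). *)
Definition coef_qderiv (q : R) (a : nat -> C) (l : nat) : C :=
  Cminus (Cmult (RtoC (qnat q (S l))) (a (S l)))
    (match l with O => RtoC 0 | S k => Cmult (RtoC (q ^ k / (1 - q))) (a k) end).
Definition coef_qderiv_n (q : R) (e : nat) (a : nat -> C) : nat -> C :=
  Nat.iter e (coef_qderiv q) a.

Fixpoint inv_qpoch (q : R) (l : nat) : R :=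
  match l with O => 1 | S k => inv_qpoch q k / (1 - q ^ S k) end.
Definition inv_qpoch_sup (q : R) : R := exp (/ (1 - q) ^ 2).
Definition growth (q s : R) : R := / ((1 - q) * sqrt q * s).
Definition majorant (q s : R) (l : nat) : R := weight q s l * inv_qpoch q l.

Lemma pow_le_1 (q : R) (n : nat) : 0 <= q <= 1 -> q ^ n <= 1.
Proof.
  intros Hq. induction n; simpl; [lra|].
  assert (0 <= q ^ n) by (apply pow_le; lra). nra.
Qed.

Lemma pow_S_lt_1 (q : R) (n : nat) : 0 < q < 1 -> 0 < q ^ S n < 1.
Proof.
  intros Hq. split; [apply pow_lt; lra|].
  apply (pow_lt_1_compat q (S n)); [lra | lia].
Qed.

Lemma inv_qpoch_ge_1 (q : R) (l : nat) : 0 < q < 1 -> 1 <= inv_qpoch q l.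
Proof.
  intros Hq. induction l; simpl inv_qpoch; [lra|].
  generalize (pow_S_lt_1 q l Hq). intros H.
  apply Rmult_le_reg_r with (1 - q ^ S l); [lra|].
  unfold Rdiv. rewrite Rmult_assoc, Rinv_l by lra. nra.
Qed.

Lemma inv_qpoch_le_exp (q : R) (l : nat) : 0 < q < 1 ->
  inv_qpoch q l <= exp ((1 - q ^ l) / (1 - q) ^ 2).
Proof.
  intros Hq. induction l.
  - simpl inv_qpoch. rewrite pow_O. replace ((1 - 1) / (1 - q) ^ 2) with 0 by (field; lra).
    rewrite exp_0. lra.
  - simpl inv_qpoch. generalize (pow_S_lt_1 q l Hq). intros H. set (x := q ^ S l) in *.
    assert (Hql : 0 < q ^ l <= 1) by (split; [apply pow_lt | apply pow_le_1]; lra).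
    assert (Hx : x <= q) by (unfold x; simpl; nra).
    assert (Hxq : x = q * q ^ l) by reflexivity.
    assert (H1 : 1 <= (1 - x) * exp (x / (1 - q))).
    { generalize (exp_ineq1_le (x / (1 - q))). intros E.
      assert ((1 - x) * (1 + x / (1 - q)) = 1 + x * (q - x) / (1 - q)) by (field; lra).
      assert (0 <= x * (q - x) / (1 - q)) by (apply Rdiv_le_0_compat; nra).
      nra. }
    assert (H2 : inv_qpoch q l / (1 - x) <= inv_qpoch q l * exp (x / (1 - q))).
    { apply Rmult_le_reg_r with (1 - x); [lra|].
      unfold Rdiv. rewrite Rmult_assoc, Rinv_l by lra.
      generalize (inv_qpoch_ge_1 q l Hq). nra. }
    eapply Rle_trans; [exact H2|].
    eapply Rle_trans; [apply Rmult_le_compat_r; [apply Rlt_le, exp_pos | exact IHl]|].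
    rewrite <- exp_plus. apply exp_le_exp.
    apply Rmult_le_reg_r with ((1 - q) ^ 2); [nra|].
    replace (((1 - q ^ l) / (1 - q) ^ 2 + x / (1 - q)) * (1 - q) ^ 2)
      with (1 - q ^ l + x * (1 - q)) by (field; lra).
    replace ((1 - x) / (1 - q) ^ 2 * (1 - q) ^ 2) with (1 - x) by (field; lra).
    assert (0 <= q ^ l * (1 - q) ^ 2) by (apply Rmult_le_pos; nra).
    rewrite Hxq. nra.
Qed.

Lemma inv_qpoch_le_sup (q : R) (l : nat) : 0 < q < 1 -> inv_qpoch q l <= inv_qpoch_sup q.
Proof.
  intros Hq. eapply Rle_trans; [now apply inv_qpoch_le_exp|]. apply exp_le_exp.
  assert (0 < q ^ l) by (apply pow_lt; lra).
  unfold Rdiv. rewrite <- (Rmult_1_l (/ (1 - q) ^ 2)) at 2.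
  apply Rmult_le_compat_r; [left; apply Rinv_0_lt_compat; nra | lra].
Qed.

Lemma weight_pos (q s : R) (l : nat) : 0 < q -> 0 < s -> 0 < weight q s l.
Proof. intros Hq Hs. apply Rmult_lt_0_compat; apply pow_lt; [exact Hs | now apply sqrt_lt_R0]. Qed.

Lemma weight_S (q s : R) (l : nat) : 0 <= q ->
  weight q s (S l) = weight q s l * s * (sqrt q * q ^ l).
Proof.
  intros Hq. unfold weight. replace (S l * S l)%nat with (l * l + (2 * l + 1))%nat by lia.
  rewrite !pow_add, (pow_mult (sqrt q) 2 l), pow2_sqrt by exact Hq. simpl. ring.
Qed.

(* The two summands of [coef_qderiv] are controlled by [majorant] through these two identities;
   with [s * s * q <= 1] the factors [s * s * q ^ S (S k)] and [1 - q ^ S k] add up to at most 1. *)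
Lemma majorant_succ (q s : R) (l : nat) : 0 < q < 1 -> 0 < s ->
  qnat q (S l) * majorant q s (S l) = growth q s * majorant q s l * (s * s * q ^ S l).
Proof.
  intros Hq Hs. unfold majorant, growth, qnat. rewrite weight_S by lra. simpl inv_qpoch.
  generalize (pow_S_lt_1 q l Hq). simpl pow. intros H.
  assert (Hr : 0 < sqrt q) by now apply sqrt_lt_R0.
  replace (s * s * (q * q ^ l)) with (s * s * (sqrt q * sqrt q * q ^ l)) by (rewrite sqrt_sqrt; lra).
  field. repeat split; lra.
Qed.

Lemma majorant_pred (q s : R) (l : nat) : 0 < q < 1 -> 0 < s ->
  q ^ l / (1 - q) * majorant q s l = growth q s * majorant q s (S l) * (1 - q ^ S l).
Proof.
  intros Hq Hs. unfold majorant, growth. rewrite weight_S by lra. simpl inv_qpoch.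
  generalize (pow_S_lt_1 q l Hq). simpl pow. intros H.
  assert (Hr : 0 < sqrt q) by now apply sqrt_lt_R0.
  field. repeat split; lra.
Qed.

Lemma majorant_pos (q s : R) (l : nat) : 0 < q < 1 -> 0 < s -> 0 < majorant q s l.
Proof.
  intros Hq Hs. apply Rmult_lt_0_compat; [now apply weight_pos | ].
  generalize (inv_qpoch_ge_1 q l Hq). lra.
Qed.

Lemma growth_pos (q s : R) : 0 < q < 1 -> 0 < s -> 0 < growth q s.
Proof.
  intros Hq Hs. apply Rinv_0_lt_compat.
  repeat apply Rmult_lt_0_compat; [lra | now apply sqrt_lt_R0 | exact Hs].
Qed.

Lemma coef_qderiv_majorant (q s K : R) (a : nat -> C) :
  0 < q < 1 -> 0 < s -> s * s * q <= 1 -> 0 <= K ->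
  (forall l, Cmod (a l) <= K * majorant q s l) ->
  forall l, Cmod (coef_qderiv q a l) <= K * growth q s * majorant q s l.
Proof.
  intros Hq Hs Hsq HK Ha l.
  assert (HKM : forall l, 0 <= K * growth q s * majorant q s l).
  { intros n. apply Rmult_le_pos; [apply Rmult_le_pos; [exact HK | now apply Rlt_le, growth_pos] |].
    now apply Rlt_le, majorant_pos. }
  assert (Hup : forall l, Cmod (Cmult (RtoC (qnat q (S l))) (a (S l)))
                          <= K * growth q s * majorant q s l * (s * s * q ^ S l)).
  { intros n. assert (Hqn : 0 <= qnat q (S n))
      by (apply Rdiv_le_0_compat; generalize (pow_S_lt_1 q n Hq); lra).
    rewrite Cmod_mult, Cmod_R, Rabs_pos_eq by exact Hqn.
    rewrite 2!Rmult_assoc, <- (Rmult_assoc (growth q s)), <- majorant_succ by lra.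
    replace (K * (qnat q (S n) * majorant q s (S n)))
      with (qnat q (S n) * (K * majorant q s (S n))) by ring.
    now apply Rmult_le_compat_l. }
  unfold coef_qderiv. eapply Rle_trans; [apply Cmod_Cminus_le|].
  eapply Rle_trans; [apply Rplus_le_compat_r, Hup|].
  destruct l as [|k].
  - rewrite Cmod_0, Rplus_0_r. rewrite <- (Rmult_1_r (K * growth q s * majorant q s 0)) at 2.
    apply Rmult_le_compat_l; [apply HKM | simpl; lra].
  - rewrite Cmod_mult, Cmod_R, Rabs_pos_eq by (apply Rdiv_le_0_compat; [apply pow_le|]; lra).
    eapply Rle_trans; [apply Rplus_le_compat_l, Rmult_le_compat_l, Ha;
                       apply Rdiv_le_0_compat; [apply pow_le|]; lra|].
    replace (q ^ k / (1 - q) * (K * majorant q s k))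
      with (K * (q ^ k / (1 - q) * majorant q s k)) by ring.
    rewrite majorant_pred by lra.
    assert (Hqk := pow_S_lt_1 q k Hq).
    assert (s * s * q ^ S (S k) <= q ^ S k)
      by (change (q ^ S (S k)) with (q * q ^ S k); nra).
    generalize (HKM (S k)). set (M := K * growth q s * majorant q s (S k)). intros HM.
    replace (K * (growth q s * majorant q s (S k) * (1 - q ^ S k))) with (M * (1 - q ^ S k))
      by (unfold M; ring).
    nra.
Qed.

Lemma coef_qderiv_n_majorant (q s K : R) (a : nat -> C) :
  0 < q < 1 -> 0 < s -> s * s * q <= 1 -> 0 <= K ->
  (forall l, Cmod (a l) <= K * majorant q s l) ->
  forall e l, Cmod (coef_qderiv_n q e a l) <= K * growth q s ^ e * majorant q s l.
Proof.
  intros Hq Hs Hsq HK Ha e. induction e as [|e IH].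
  - intros l. rewrite pow_O, Rmult_1_r. apply Ha.
  - intros l. replace (K * growth q s ^ S e) with (K * growth q s ^ e * growth q s) by (simpl; ring).
    apply (coef_qderiv_majorant q s); [exact Hq | exact Hs | exact Hsq | | exact IH].
    apply Rmult_le_pos; [exact HK | apply pow_le, Rlt_le, growth_pos; assumption].
Qed.

Lemma coef_qderiv_n_bound (q s K : R) (a : nat -> C) :
  0 < q < 1 -> 0 < s -> s * s * q <= 1 -> 0 <= K ->
  (forall l, Cmod (a l) <= K * weight q s l) ->
  forall e l, Cmod (coef_qderiv_n q e a l) <= K * growth q s ^ e * inv_qpoch_sup q * weight q s l.
Proof.
  intros Hq Hs Hsq HK Ha e l.
  assert (HW := weight_pos q s l (proj1 Hq) Hs).
  assert (HKT : 0 <= K * growth q s ^ e) by (apply Rmult_le_pos, pow_le, Rlt_le, growth_pos; assumption).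
  eapply Rle_trans; [apply (coef_qderiv_n_majorant q s K); try assumption|].
  - intros n. eapply Rle_trans; [apply Ha|]. unfold majorant. rewrite <- Rmult_assoc.
    rewrite <- (Rmult_1_r (K * weight q s n)) at 1.
    apply Rmult_le_compat_l; [apply Rmult_le_pos; [exact HK | now apply Rlt_le, weight_pos]|].
    now apply inv_qpoch_ge_1.
  - unfold majorant. rewrite (Rmult_comm (weight q s l)), <- !Rmult_assoc.
    apply Rmult_le_compat_r; [lra|]. apply Rmult_le_compat_l; [exact HKT | now apply inv_qpoch_le_sup].
Qed.

(** * Power series times e_{q^2}(-x^2) *)

Lemma Rabs_Im_le_Cmod (y : C) : Rabs (Im y) <= Cmod y.
Proof. eapply Rle_trans; [apply Rmax_r | apply Rmax_Cmod]. Qed.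

Lemma in_strip_of_Cmod_lt (y : C) : Cmod y < 1 -> in_strip y.
Proof. intros H. unfold in_strip. generalize (Rabs_Im_le_Cmod y). lra. Qed.

Lemma in_strip_qmul (q : R) (x : C) : 0 < q < 1 -> in_strip x -> in_strip (Cmult (RtoC q) x).
Proof.
  intros Hq Hx. unfold in_strip in *. destruct x as [a b]. unfold Im in *. simpl in *.
  replace (q * b + 0 * a) with (q * b) by ring. rewrite Rabs_mult, (Rabs_pos_eq q) by lra.
  assert (0 <= Rabs b) by apply Rabs_pos. nra.
Qed.

Lemma in_strip_1_plus_sq_neq0 (x : C) : in_strip x -> Cplus (RtoC 1) (Cmult x x) <> RtoC 0.
Proof.
  intros Hx E. unfold in_strip in Hx. destruct x as [a b]. unfold Im in Hx. simpl in Hx.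
  assert (E1 := f_equal fst E). assert (E2 := f_equal snd E). simpl in E1, E2.
  apply Rabs_def2 in Hx. nra.
Qed.

Lemma locally'_0_proper : ProperFilter (@locally' C_UniformSpace (RtoC 0)).
Proof.
  constructor; [|apply locally'_filter].
  intros P [eps Heps]. assert (He := cond_pos eps). exists (RtoC (eps / 2)). apply Heps.
  - apply ball_of_Cmod_lt. rewrite Cminus_0_r, Cmod_R, Rabs_pos_eq; lra.
  - intros E. apply (f_equal fst) in E. simpl in E. lra.
Qed.

Lemma lim_locally'_0 (f : C -> C) (L : C) :
  filterlim f (@locally' C_UniformSpace (RtoC 0)) (locally L) ->
  @lim C_CompleteNormedModule (filtermap f (@locally' C_UniformSpace (RtoC 0))) = L.
Proof.
  intros H.
  assert (HP : ProperFilter (filtermap f (@locally' C_UniformSpace (RtoC 0))))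
    by apply filtermap_proper_filter, locally'_0_proper.
  assert (Hc : cauchy (filtermap f (@locally' C_UniformSpace (RtoC 0)))).
  { intros eps. exists L. apply (proj1 (filterlim_locally _ _) H eps). }
  assert (Hlim : filterlim f (@locally' C_UniformSpace (RtoC 0))
     (locally (@lim C_CompleteNormedModule (filtermap f (@locally' C_UniformSpace (RtoC 0)))))).
  { apply (proj2 (filterlim_locally _ _)). intros eps.
    exact (@complete_cauchy C_CompleteNormedModule _ HP Hc eps). }
  symmetry. exact (@filterlim_locally_unique _ C_AbsRing C_NormedModule _
    (Proper_StrongProper _ locally'_0_proper) f L _ H Hlim).
Qed.

Lemma filterlim_locally'_0_of_Cmod_le (f : C -> C) (L : C) (rho M : R) : 0 < rho ->
  (forall y, Cmod y < rho -> y <> RtoC 0 -> Cmod (Cminus (f y) L) <= M * Cmod y) ->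
  filterlim f (@locally' C_UniformSpace (RtoC 0)) (locally L).
Proof.
  intros Hr H. apply (proj2 (filterlim_locally _ _)). intros eps.
  set (M' := Rabs M + 1). assert (HM : 0 < M') by (unfold M'; generalize (Rabs_pos M); lra).
  set (d := Rmin rho (eps / M')).
  assert (Hd : 0 < d / sqrt 2).
  { apply Rdiv_lt_0_compat; [apply Rmin_pos; [exact Hr | apply Rdiv_lt_0_compat; [apply cond_pos | exact HM]]|].
    apply sqrt_lt_R0; lra. }
  exists (mkposreal _ Hd). intros y Hy Hy0.
  apply Cmod_lt_of_ball in Hy. simpl in Hy. rewrite Cminus_0_r in Hy.
  replace (sqrt 2 * (d / sqrt 2)) with d in Hy by (field; apply Rgt_not_eq, sqrt_lt_R0; lra).
  apply ball_of_Cmod_lt.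
  assert (H1 : Cmod y < rho) by (generalize (Rmin_l rho (eps / M')); unfold d in Hy; lra).
  assert (H2 : M' * Cmod y < eps).
  { apply Rmult_lt_reg_r with (/ M'); [now apply Rinv_0_lt_compat|].
    replace (M' * Cmod y * / M') with (Cmod y) by (field; lra).
    generalize (Rmin_r rho (eps / M')). unfold d in Hy. unfold Rdiv in *. lra. }
  specialize (H y H1 Hy0). assert (0 <= Cmod y) by apply Cmod_ge_0.
  assert (M <= M') by (unfold M'; generalize (Rle_abs M); lra). nra.
Qed.

Section WeightedPowerSeries.

Variables (q s : R).
Hypotheses (Hq : 0 < q < 1) (Hs : 0 < s).

Definition Cpser (a : nat -> C) (x : C) : C := Csum (fun l => Cmult (a l) (Cpow x l)).
Definition weight_series (R0 : R) : R := Series (fun l => weight q s l * R0 ^ l).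
Definition weight_series_tail : R := Series (fun l => weight q s (S l)).

Lemma ex_series_weight (R0 : R) : 0 <= R0 ->
  ex_series (fun l => weight q s l * R0 ^ l).
Proof.
  intros HR.
  (* Ratio test on a positive majorant: [R0] itself may be [0]. *)
  set (b := fun l => weight q s l * (R0 + 1) ^ l).
  assert (Hb : forall l, 0 < b l).
  { intros l. apply Rmult_lt_0_compat; [apply weight_pos; lra | apply pow_lt; lra]. }
  assert (Hex : ex_series (fun n => Rabs (b n))).
  { apply (ex_series_DAlembert b 0); [lra | intros n; generalize (Hb n); lra |].
    apply (is_lim_seq_ext (fun n => s * (R0 + 1) * sqrt q * q ^ n)).
    - intros n. rewrite Rabs_pos_eq by (apply Rlt_le, Rdiv_lt_0_compat; apply Hb).
      unfold b. rewrite weight_S by lra. simpl pow.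
      field. split; [apply pow_nonzero; lra | generalize (weight_pos q s n ltac:(lra) Hs); lra].
    - replace (Finite 0) with (Rbar_mult (s * (R0 + 1) * sqrt q) 0) by (simpl; f_equal; ring).
      apply is_lim_seq_scal_l, is_lim_seq_geom. rewrite Rabs_pos_eq; lra. }
  apply (@ex_series_le R_AbsRing R_CompleteNormedModule _ (fun n => Rabs (b n))); [intros n | exact Hex].
  change (norm (weight q s n * R0 ^ n)) with (Rabs (weight q s n * R0 ^ n)).
  assert (HW := weight_pos q s n ltac:(lra) Hs).
  rewrite !Rabs_pos_eq; [| apply Rlt_le, Hb | apply Rmult_le_pos; [lra | apply pow_le; lra]].
  apply Rmult_le_compat_l; [lra | apply pow_incr; lra].
Qed.

Lemma is_series_Cpser (K : R) (b : nat -> C) (x : C) :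
  (forall l, Cmod (b l) <= K * weight q s l) ->
  is_series (fun l => Cmult (b l) (Cpow x l)) (Cpser b x).
Proof.
  intros Hb. apply is_series_Csum.
  apply ex_series_Cmod_le with (b := fun l => K * (weight q s l * Cmod x ^ l)).
  - intros l. rewrite Cmod_mult, Cmod_pow, <- Rmult_assoc.
    apply Rmult_le_compat_r; [apply pow_le, Cmod_ge_0 | apply Hb].
  - apply (@ex_series_scal_l R_AbsRing R_NormedModule K), ex_series_weight, Cmod_ge_0.
Qed.

Lemma Cmod_Cpser_le (K : R) (b : nat -> C) (x : C) :
  (forall l, Cmod (b l) <= K * weight q s l) ->
  Cmod (Cpser b x) <= K * weight_series (Cmod x).
Proof.
  intros Hb.
  apply (is_series_Cmod_le _ _ (fun l => K * (weight q s l * Cmod x ^ l)) _ (is_series_Cpser K b x Hb)).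
  - apply (@is_series_scal R_AbsRing R_NormedModule K), Series_correct, ex_series_weight, Cmod_ge_0.
  - intros l. rewrite Cmod_mult, Cmod_pow, <- Rmult_assoc.
    apply Rmult_le_compat_r; [apply pow_le, Cmod_ge_0 | apply Hb].
Qed.

Lemma Cpser_scal_l (K : R) (c : C) (a : nat -> C) (x : C) :
  (forall l, Cmod (a l) <= K * weight q s l) ->
  Cpser (fun l => Cmult c (a l)) x = Cmult c (Cpser a x).
Proof.
  intros Ha. apply Csum_eq.
  apply (is_series_ext (fun l => scal c (Cmult (a l) (Cpow x l)))).
  - intros l. change (Cmult c (Cmult (a l) (Cpow x l)) = Cmult (Cmult c (a l)) (Cpow x l)). ring.
  - exact (@is_series_scal C_AbsRing C_NormedModule c _ _ (is_series_Cpser K a x Ha)).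
Qed.

Lemma Cmod_Cpser_sub_coef0_le (K : R) (b : nat -> C) (y : C) :
  (forall l, Cmod (b l) <= K * weight q s l) -> Cmod y <= 1 ->
  Cmod (Cminus (Cpser b y) (b O)) <= K * weight_series_tail * Cmod y.
Proof.
  intros Hb Hy.
  assert (H1 : is_series (fun k => Cmult (b (S k)) (Cpow y (S k))) (Cminus (Cpser b y) (b O))).
  { apply (is_series_incr_1 (fun l => Cmult (b l) (Cpow y l))).
    replace (plus _ _) with (Cpser b y)
      by (change (Cpser b y = Cplus (Cminus (Cpser b y) (b O)) (Cmult (b O) (RtoC 1))); unfold Cminus; ring).
    now apply (is_series_Cpser K). }
  apply (is_series_Cmod_le _ _ (fun k => Cmod y * K * weight q s (S k)) _ H1).
  - rewrite (Rmult_comm _ (Cmod y)), <- Rmult_assoc.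
    apply (@is_series_scal R_AbsRing R_NormedModule (Cmod y * K) (fun k => weight q s (S k))).
    apply Series_correct, (proj1 (ex_series_incr_1 (fun l => weight q s l))).
    apply (ex_series_ext (fun l => weight q s l * 1 ^ l)); [intros n; now rewrite pow1, Rmult_1_r|].
    apply ex_series_weight; lra.
  - intros k. rewrite Cmod_mult, Cmod_pow. simpl pow.
    assert (0 <= Cmod y) by apply Cmod_ge_0.
    assert (Cmod y ^ k <= 1) by (apply pow_le_1; lra).
    assert (0 <= Cmod y ^ k) by (apply pow_le; lra).
    generalize (Hb (S k)) (Cmod_ge_0 (b (S k))). intros.
    assert (Cmod (b (S k)) * (Cmod y * Cmod y ^ k) <= Cmod (b (S k)) * Cmod y).
    { rewrite <- (Rmult_1_r (Cmod (b (S k)) * Cmod y)), <- Rmult_assoc. apply Rmult_le_compat_l; nra. }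
    nra.
Qed.

Lemma Cpser_0 (K : R) (b : nat -> C) :
  (forall l, Cmod (b l) <= K * weight q s l) -> Cpser b (RtoC 0) = b O.
Proof.
  intros Hb. generalize (Cmod_Cpser_sub_coef0_le K b (RtoC 0) Hb).
  rewrite Cmod_0, Rmult_0_r. intros H.
  assert (E : Cminus (Cpser b (RtoC 0)) (b O) = RtoC 0).
  { apply Cmod_eq_0. generalize (Cmod_ge_0 (Cminus (Cpser b (RtoC 0)) (b O))) (H ltac:(lra)). lra. }
  replace (Cpser b (RtoC 0)) with (Cplus (Cminus (Cpser b (RtoC 0)) (b O)) (b O)) by (unfold Cminus; ring).
  rewrite E. ring.
Qed.

Lemma is_series_Cpser_sub_qmul (K : R) (b : nat -> C) (x : C) :
  (forall l, Cmod (b l) <= K * weight q s l) ->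
  is_series (fun l => Cmult (Cmult (b (S l)) (RtoC (1 - q ^ S l))) (Cpow x (S l)))
    (Cminus (Cpser b x) (Cpser b (Cmult (RtoC q) x))).
Proof.
  intros Hb.
  set (d := fun n => plus (Cmult (b n) (Cpow x n)) (opp (Cmult (b n) (Cpow (Cmult (RtoC q) x) n)))).
  apply (is_series_ext (fun k => d (S k))).
  - intros n. change (Cplus (Cmult (b (S n)) (Cpow x (S n)))
      (Copp (Cmult (b (S n)) (Cpow (Cmult (RtoC q) x) (S n)))) =
      Cmult (Cmult (b (S n)) (RtoC (1 - q ^ S n))) (Cpow x (S n))).
    rewrite Cpow_mult_l, <- RtoC_pow, RtoC_minus. ring.
  - apply (is_series_incr_1 d).
    replace (plus _ _) with (plus (Cpser b x) (opp (Cpser b (Cmult (RtoC q) x)))).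
    + exact (is_series_minus _ _ _ _ (is_series_Cpser K b x Hb) (is_series_Cpser K b _ Hb)).
    + unfold d. change (Cplus (Cpser b x) (Copp (Cpser b (Cmult (RtoC q) x))) =
        Cplus (Cminus (Cpser b x) (Cpser b (Cmult (RtoC q) x)))
          (Cplus (Cmult (b O) (RtoC 1)) (Copp (Cmult (b O) (RtoC 1))))).
      unfold Cminus. ring.
Qed.

Lemma is_series_Cpser_qmul_shift (K : R) (b : nat -> C) (x : C) :
  (forall l, Cmod (b l) <= K * weight q s l) ->
  is_series (fun l => match l with O => RtoC 0
                      | S k => Cmult (Cmult (RtoC (q ^ k)) (b k)) (Cpow x (S (S k))) end)
    (Cmult (Cmult x x) (Cpser b (Cmult (RtoC q) x))).
Proof.
  intros Hb. apply is_series_decr_1.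
  replace (plus _ _) with (Cmult (Cmult x x) (Cpser b (Cmult (RtoC q) x)))
    by (change (Cmult (Cmult x x) (Cpser b (Cmult (RtoC q) x)) =
          Cplus (Cmult (Cmult x x) (Cpser b (Cmult (RtoC q) x))) (Copp (RtoC 0))); ring).
  apply (is_series_ext (fun n => scal (Cmult x x) (Cmult (b n) (Cpow (Cmult (RtoC q) x) n)))).
  - intros n. change (Cmult (Cmult x x) (Cmult (b n) (Cpow (Cmult (RtoC q) x) n)) =
      Cmult (Cmult (RtoC (q ^ n)) (b n)) (Cpow x (S (S n)))).
    rewrite Cpow_mult_l, <- RtoC_pow. simpl Cpow. ring.
  - apply (@is_series_scal C_AbsRing C_NormedModule). now apply (is_series_Cpser K).
Qed.

Lemma Cpser_coef_qderiv (K : R) (b : nat -> C) (x : C) :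
  (forall l, Cmod (b l) <= K * weight q s l) -> x <> RtoC 0 ->
  Cpser (coef_qderiv q b) x =
  Cdiv (Cminus (Cpser b x) (Cmult (Cplus (RtoC 1) (Cmult x x)) (Cpser b (Cmult (RtoC q) x))))
       (Cmult (RtoC (1 - q)) x).
Proof.
  intros Hb Hx. set (c := Cinv (Cmult (RtoC (1 - q)) x)).
  assert (H := @is_series_scal C_AbsRing C_NormedModule c _ _
    (is_series_minus _ _ _ _ (is_series_Cpser_sub_qmul K b x Hb) (is_series_Cpser_qmul_shift K b x Hb))).
  transitivity (Cmult c (Cminus (Cminus (Cpser b x) (Cpser b (Cmult (RtoC q) x)))
                               (Cmult (Cmult x x) (Cpser b (Cmult (RtoC q) x)))));
    [|unfold c, Cdiv, Cminus; ring].
  apply Csum_eq. revert H. apply is_series_ext. intros n.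
  change (Cmult c (Cplus (Cmult (Cmult (b (S n)) (RtoC (1 - q ^ S n))) (Cpow x (S n)))
    (Copp (match n with O => RtoC 0 | S k => Cmult (Cmult (RtoC (q ^ k)) (b k)) (Cpow x (S (S k))) end)))
    = Cmult (coef_qderiv q b n) (Cpow x n)).
  assert (Hq1 : RtoC (1 - q) <> RtoC 0) by (apply RtoC_neq0; lra).
  assert (Hq1' : Cminus (RtoC 1) (RtoC q) <> RtoC 0) by (rewrite <- RtoC_minus; exact Hq1).
  unfold c, coef_qderiv, qnat.
  destruct n as [|k]; simpl Cpow; simpl pow; rewrite ?Rmult_1_r, !RtoC_div, !RtoC_minus, ?RtoC_mult by lra;
    field; repeat split; assumption.
Qed.

Lemma qdiffquot_Cpser_gauss (K : R) (b : nat -> C) (F : C -> C) (x : C) :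
  (forall l, Cmod (b l) <= K * weight q s l) ->
  (forall y, in_strip y -> F y = Cmult (Cpser b y) (gauss_q q y)) ->
  in_strip x -> x <> RtoC 0 ->
  qdiffquot q F x = Cmult (Cpser (coef_qderiv q b) x) (gauss_q q x).
Proof.
  intros Hb HF Hx Hx0.
  unfold qdiffquot. rewrite (HF x Hx), (HF _ (in_strip_qmul q x Hq Hx)).
  rewrite (gauss_q_qmul q x Hq (in_strip_1_plus_sq_neq0 x Hx)).
  rewrite (Cpser_coef_qderiv K b x Hb Hx0). unfold Cdiv, Cminus. ring.
Qed.

Lemma filterlim_Cpser_gauss_0 (K : R) (b : nat -> C) :
  (forall l, Cmod (b l) <= K * weight q s l) ->
  filterlim (fun y => Cmult (Cpser b y) (gauss_q q y)) (@locally' C_UniformSpace (RtoC 0))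
    (locally (Cmult (Cpser b (RtoC 0)) (gauss_q q (RtoC 0)))).
Proof.
  intros Hb. rewrite (Cpser_0 K b Hb), gauss_q_0, Cmult_1_r.
  set (A := K * weight_series_tail). set (B := 6 / (1 - q ^ 2)).
  assert (HB : 0 <= B) by (apply Rdiv_le_0_compat; nra).
  apply (filterlim_locally'_0_of_Cmod_le _ _ (Rmin 1 ((1 - q ^ 2) / 6)) (A * (1 + B) + Cmod (b O) * B));
    [apply Rmin_pos; nra|].
  intros y Hy _.
  assert (Hy1 := Cmod_Cpser_sub_coef0_le K b y Hb ltac:(generalize (Rmin_l 1 ((1 - q ^ 2) / 6)); lra)).
  assert (Hy2 := gauss_q_sub1_le q y Hq ltac:(generalize (Rmin_r 1 ((1 - q ^ 2) / 6)); lra)).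
  fold A in Hy1. fold B in Hy2.
  assert (0 <= Cmod y <= 1) by (split; [apply Cmod_ge_0 | generalize (Rmin_l 1 ((1 - q ^ 2) / 6)); lra]).
  assert (HE : Cmod (gauss_q q y) <= 1 + B).
  { replace (gauss_q q y) with (Cplus (RtoC 1) (Cminus (gauss_q q y) (RtoC 1))) by (unfold Cminus; ring).
    eapply Rle_trans; [apply Cmod_triangle|]. rewrite Cmod_1. nra. }
  replace (Cminus (Cmult (Cpser b y) (gauss_q q y)) (b O))
    with (Cplus (Cmult (Cminus (Cpser b y) (b O)) (gauss_q q y)) (Cmult (b O) (Cminus (gauss_q q y) (RtoC 1))))
    by (unfold Cminus; ring).
  eapply Rle_trans; [apply Cmod_triangle|]. rewrite !Cmod_mult.
  generalize (Cmod_ge_0 (Cminus (Cpser b y) (b O))) (Cmod_ge_0 (b O)) (Cmod_ge_0 (gauss_q q y)). intros.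
  assert (Cmod (Cminus (Cpser b y) (b O)) * Cmod (gauss_q q y) <= A * Cmod y * (1 + B))
    by (apply Rmult_le_compat; lra).
  assert (Cmod (b O) * Cmod (Cminus (gauss_q q y) (RtoC 1)) <= Cmod (b O) * (B * Cmod y))
    by (apply Rmult_le_compat_l; lra).
  nra.
Qed.

(* At [x = 0] the q-derivative is defined as a limit, which exists because the representation
   [qdiffquot_Cpser_gauss] holds on a punctured neighbourhood of [0] and its right-hand side is
   continuous at [0]. *)
Lemma qderiv_Cpser_gauss (K : R) (b : nat -> C) (F : C -> C) :
  s * s * q <= 1 -> 0 <= K ->
  (forall l, Cmod (b l) <= K * weight q s l) ->
  (forall y, in_strip y -> F y = Cmult (Cpser b y) (gauss_q q y)) ->
  forall x, in_strip x -> qderiv q F x = Cmult (Cpser (coef_qderiv q b) x) (gauss_q q x).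
Proof.
  intros Hsq HK Hb HF x Hx. unfold qderiv.
  destruct (Req_EM_T (Re x) 0) as [H1|H1]; destruct (Req_EM_T (Im x) 0) as [H2|H2];
    try (apply (qdiffquot_Cpser_gauss K); auto; intros ->; simpl in *; congruence).
  destruct x as [x1 x2]. simpl in H1, H2. subst. change (0, 0) with (RtoC 0).
  apply lim_locally'_0.
  apply (filterlim_ext_loc (fun y => Cmult (Cpser (coef_qderiv q b) y) (gauss_q q y))).
  - exists (mkposreal (/ 2) ltac:(lra)). intros y Hy Hy0.
    apply Cmod_lt_of_ball in Hy. simpl in Hy. rewrite Cminus_0_r in Hy.
    symmetry. apply (qdiffquot_Cpser_gauss K); auto.
    apply in_strip_of_Cmod_lt. generalize sqrt2_lt_2. lra.
  - apply (filterlim_Cpser_gauss_0 (K * growth q s * inv_qpoch_sup q)).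
    intros l. rewrite <- (pow_1 (growth q s)). exact (coef_qderiv_n_bound q s K b Hq Hs Hsq HK Hb 1 l).
Qed.

Lemma qderiv_n_Cpser_gauss (K : R) (a : nat -> C) (h : C -> C) :
  s * s * q <= 1 -> 0 <= K ->
  (forall l, Cmod (a l) <= K * weight q s l) ->
  (forall y, in_strip y -> h y = Cmult (Cpser a y) (gauss_q q y)) ->
  forall e x, in_strip x -> qderiv_n q e h x = Cmult (Cpser (coef_qderiv_n q e a) x) (gauss_q q x).
Proof.
  intros Hsq HK Ha Hh e. induction e as [|e IH]; [exact Hh|].
  apply (qderiv_Cpser_gauss (K * growth q s ^ e * inv_qpoch_sup q)); [exact Hsq | | | exact IH].
  - apply Rmult_le_pos; [apply Rmult_le_pos; [exact HK | apply pow_le, Rlt_le, growth_pos; assumption]|].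
    apply Rlt_le, exp_pos.
  - exact (coef_qderiv_n_bound q s K a Hq Hs Hsq HK Ha e).
Qed.

Section SumOfPowerSeries.

Variables (K Sa : R) (b : nat -> nat -> C) (al : nat -> R).
Hypothesis HSa : is_series al Sa.
Hypothesis Hb : forall e l, Cmod (b e l) <= al e * K * weight q s l.

Lemma is_series_Csum_col (l : nat) : is_series (fun e => b e l) (Csum (fun e => b e l)).
Proof.
  apply is_series_Csum, ex_series_Cmod_le with (b := fun e => al e * (K * weight q s l)).
  - intros e. rewrite <- Rmult_assoc. apply Hb.
  - apply ex_series_scal_r. eexists; exact HSa.
Qed.

Lemma Cmod_Csum_col_le (l : nat) : Cmod (Csum (fun e => b e l)) <= Sa * K * weight q s l.
Proof.
  rewrite Rmult_assoc.
  apply (is_series_Cmod_le _ _ (fun e => al e * (K * weight q s l)) _ (is_series_Csum_col l)).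
  - now apply is_series_scal_r.
  - intros e. rewrite <- Rmult_assoc. apply Hb.
Qed.

Lemma ex_series_Cmod_Cpser (x : C) : ex_series (fun e => Cmod (Cpser (b e) x)).
Proof.
  apply (@ex_series_le R_AbsRing R_CompleteNormedModule _ (fun e => al e * (K * weight_series (Cmod x)))).
  - intros e. change (norm (Cmod ?z)) with (Rabs (Cmod z)).
    rewrite Rabs_pos_eq, <- Rmult_assoc by apply Cmod_ge_0.
    apply (Cmod_Cpser_le (al e * K)), Hb.
  - apply ex_series_scal_r. eexists; exact HSa.
Qed.

Lemma is_series_Cpser_swap (x : C) :
  is_series (fun e => Cpser (b e) x) (Cpser (fun l => Csum (fun e => b e l)) x).
Proof.
  set (be := fun l => K * (weight q s l * Cmod x ^ l)).
  assert (Hbe : is_series be (K * weight_series (Cmod x))).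
  { apply (@is_series_scal R_AbsRing R_NormedModule K), Series_correct, ex_series_weight, Cmod_ge_0. }
  assert (Hu : forall e l, Cmod (Cmult (b e l) (Cpow x l)) <= al e * be l).
  { intros e l. unfold be. rewrite Cmod_mult, Cmod_pow.
    replace (al e * (K * (weight q s l * Cmod x ^ l))) with (al e * K * weight q s l * Cmod x ^ l) by ring.
    apply Rmult_le_compat_r; [apply pow_le, Cmod_ge_0 | apply Hb]. }
  generalize (is_series_Csum_swap _ al be Sa _ Hu HSa Hbe).
  replace (fun l => Csum (fun e => Cmult (b e l) (Cpow x l)))
    with (fun l => Cmult (Csum (fun e => b e l)) (Cpow x l)); [exact (fun H => H)|].
  apply functional_extensionality. intros l. symmetry. apply Csum_eq.
  apply (is_series_ext (fun e => scal (Cpow x l) (b e l))).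
  - intros e. change (Cmult (Cpow x l) (b e l) = Cmult (b e l) (Cpow x l)). ring.
  - rewrite Cmult_comm. exact (@is_series_scal C_AbsRing C_NormedModule _ _ _ (is_series_Csum_col l)).
Qed.

End SumOfPowerSeries.

End WeightedPowerSeries.

(** * The q-convolution *)

Lemma Rpower_half (q : R) (n : nat) : 0 < q -> Rpower q (INR n / 2) = sqrt q ^ n.
Proof.
  intros Hq. replace (INR n / 2) with (/ 2 * INR n) by field.
  rewrite <- Rpower_mult, Rpower_sqrt by exact Hq. apply Rpower_pow. apply sqrt_lt_R0; exact Hq.
Qed.

Lemma qpochR_pos (q : R) (k : nat) : 0 < q < 1 -> 0 < qpochR q q k.
Proof.
  intros Hq. induction k. simpl; lra. simpl. apply Rmult_lt_0_compat. exact IHk.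
  generalize (pow_S_lt_1 q k Hq). simpl. intros. lra.
Qed.

Lemma qfact_pos (q : R) (k : nat) : 0 < q < 1 -> 0 < qfact q k.
Proof. intros Hq. unfold qfact. apply Rdiv_lt_0_compat. apply qpochR_pos; exact Hq. apply pow_lt; lra. Qed.

Lemma in_Ms_weight (q s : R) (F : C -> C) : 0 < q -> in_Ms q s F ->
  exists (a : nat -> C) (K : R), 0 < K /\ (forall l, Cmod (a l) <= K * weight q s l) /\
    forall x, in_strip x -> F x = Cmult (Cpser a x) (gauss_q q x).
Proof.
  intros Hq [a [K [HK [Ha HF]]]]. exists a, K. split; [exact HK|split; [|exact HF]].
  intros l. unfold weight. rewrite <- Rpower_half, <- Rmult_assoc by exact Hq. apply Ha.
Qed.

Lemma in_Ms_of_weight (q s K : R) (a : nat -> C) (F : C -> C) : 0 < q -> 0 < s ->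
  (forall l, Cmod (a l) <= K * weight q s l) ->
  (forall x, in_strip x -> F x = Cmult (Cpser a x) (gauss_q q x)) -> in_Ms q s F.
Proof.
  intros Hq Hs Ha HF. exists a, (Rabs K + 1). split; [generalize (Rabs_pos K); lra | split; [|exact HF]].
  intros l. rewrite Rpower_half, Rmult_assoc by exact Hq. fold (weight q s l).
  eapply Rle_trans; [apply Ha|]. apply Rmult_le_compat_r; [now apply Rlt_le, weight_pos|].
  generalize (Rle_abs K); lra.
Qed.

Lemma sqr_mul_lt_1 (q s : R) : 0 < q -> 0 < s < / sqrt q -> s * s * q < 1.
Proof.
  intros Hq Hs. assert (Hr : 0 < sqrt q) by now apply sqrt_lt_R0.
  assert (Hsr : s * sqrt q < 1).
  { apply Rmult_lt_reg_r with (/ sqrt q); [now apply Rinv_0_lt_compat|].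
    rewrite Rmult_assoc, Rinv_r by lra. lra. }
  replace (s * s * q) with ((s * sqrt q) * (s * sqrt q)) by (rewrite <- (sqrt_sqrt q) at 3; lra).
  assert (0 < s * sqrt q) by (apply Rmult_lt_0_compat; lra). nra.
Qed.

Definition qconv_coef (q gamma : R) (g : R -> C) (e : nat) : C :=
  Cdiv (Cmult (RtoC ((-1) ^ e)) (qmoment q gamma g e)) (RtoC (qfact q e)).

Lemma Cmod_qmoment_series_term (q gamma T : R) (g : R -> C) (e : nat) : 0 < q < 1 -> 0 <= T ->
  Cmod (qmoment_series_term q gamma g (RtoC T) e) = Cmod (qconv_coef q gamma g e) * T ^ e.
Proof.
  intros Hq HT. unfold qmoment_series_term, qconv_coef.
  assert (Hf := qfact_pos q e Hq).
  rewrite !Cmod_div by (apply RtoC_neq0; lra).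
  rewrite !Cmod_mult, Cmod_pow, !Cmod_R, pow_1_abs, (Rabs_pos_eq T) by lra.
  field. rewrite Rabs_pos_eq; lra.
Qed.

Lemma ex_series_qconv_coef_growth (q gamma s : R) (g : R -> C) : 0 < q < 1 -> 0 < s ->
  (forall t : C, Cmod t <= / ((1 - q) * sqrt q * s) ->
     ex_series (fun k => Cmod (qmoment_series_term q gamma g t k))) ->
  ex_series (fun e => Cmod (qconv_coef q gamma g e) * growth q s ^ e).
Proof.
  intros Hq Hs Hmom. assert (HT := growth_pos q s Hq Hs).
  eapply ex_series_ext; [intros e; apply Cmod_qmoment_series_term; [exact Hq | lra]|].
  apply Hmom. rewrite Cmod_R, Rabs_pos_eq by lra. apply Rle_refl.
Qed.

Section ConvolutionCoefficients.

Variables (q s gamma K : R) (g : R -> C) (a : nat -> C).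
Hypotheses (Hq : 0 < q < 1) (Hs : 0 < s) (Hsq : s * s * q <= 1) (HK : 0 <= K).
Hypothesis Ha : forall l, Cmod (a l) <= K * weight q s l.

Definition conv_coef (e l : nat) : C := Cmult (qconv_coef q gamma g e) (coef_qderiv_n q e a l).

Lemma Cmod_conv_coef_le (e l : nat) :
  Cmod (conv_coef e l) <= Cmod (qconv_coef q gamma g e) * growth q s ^ e * (K * inv_qpoch_sup q) * weight q s l.
Proof.
  unfold conv_coef. rewrite Cmod_mult.
  replace (Cmod (qconv_coef q gamma g e) * growth q s ^ e * (K * inv_qpoch_sup q) * weight q s l)
    with (Cmod (qconv_coef q gamma g e) * (K * growth q s ^ e * inv_qpoch_sup q * weight q s l)) by ring.
  apply Rmult_le_compat_l; [apply Cmod_ge_0 | now apply coef_qderiv_n_bound].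
Qed.

Lemma qconv_term_eq_Cpser (h : C -> C) :
  (forall y, in_strip y -> h y = Cmult (Cpser a y) (gauss_q q y)) ->
  forall x e, in_strip x -> qconv_term q gamma g h x e = Cmult (gauss_q q x) (Cpser (conv_coef e) x).
Proof.
  intros Hh x e Hx. unfold qconv_term, conv_coef.
  rewrite (qderiv_n_Cpser_gauss q s Hq Hs K a h Hsq HK Ha Hh e x Hx).
  rewrite (Cpser_scal_l q s Hq Hs _ _ _ _ (coef_qderiv_n_bound q s K a Hq Hs Hsq HK Ha e)).
  unfold qconv_coef. ring.
Qed.

End ConvolutionCoefficients.

Theorem lemma6p6 (q gamma s : R) (g : R -> C) (h : C -> C) :
  0 < q < 1 -> 0 < gamma -> 0 < s < / sqrt q ->
  in_Ms q s h ->
  in_Iinf q gamma g ->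
  (forall t : C, Cmod t <= / ((1 - q) * sqrt q * s) ->
     ex_series (fun k => Cmod (qmoment_series_term q gamma g t k))) ->
  (forall x : C, in_strip x -> ex_series (fun e => Cmod (qconv_term q gamma g h x e))) /\
  in_Ms q s (qconv q gamma g h).
Proof.
  (* The integrability of [g] enters only through the convergence of its moment series. *)
  intros Hq _ Hs HMs _ Hmom.
  assert (Hs0 : 0 < s) by lra.
  assert (Hsq := Rlt_le _ _ (sqr_mul_lt_1 q s (proj1 Hq) Hs)).
  destruct (in_Ms_weight q s h (proj1 Hq) HMs) as (a & K & HK & Ha & Hh).
  destruct (ex_series_qconv_coef_growth q gamma s g Hq Hs0 Hmom) as [Sa HSa].
  assert (Hb := Cmod_conv_coef_le q s gamma K g a Hq Hs0 Hsq (Rlt_le _ _ HK) Ha).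
  assert (Hterm := qconv_term_eq_Cpser q s gamma K g a Hq Hs0 Hsq (Rlt_le _ _ HK) Ha h Hh).
  split.
  - intros x Hx.
    apply (ex_series_ext (fun e => Cmod (gauss_q q x) * Cmod (Cpser (conv_coef q gamma g a e) x))).
    + intros e. now rewrite Hterm, Cmod_mult.
    + apply (@ex_series_scal_l R_AbsRing R_NormedModule), (ex_series_Cmod_Cpser q s Hq Hs0 _ Sa _ _ HSa Hb).
  - apply (in_Ms_of_weight q s (Sa * (K * inv_qpoch_sup q)) (fun l => Csum (fun e => conv_coef q gamma g a e l))
      _ (proj1 Hq) Hs0).
    + exact (Cmod_Csum_col_le q s _ Sa _ _ HSa Hb).
    + intros x Hx. unfold qconv. apply Csum_eq.
      apply (is_series_ext (fun e => scal (gauss_q q x) (Cpser (conv_coef q gamma g a e) x))).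
      * intros e. now rewrite Hterm.
      * rewrite Cmult_comm. apply (@is_series_scal C_AbsRing C_NormedModule).
        exact (is_series_Cpser_swap q s Hq Hs0 _ Sa _ _ HSa Hb x).
Qed.
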